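(* For every total Boolean function $f:\{0,1\}^n\to\{0,1\}$, $\lambda(f)\le\deg(f)$.
   Context: $\deg(f)$ is the degree of the unique multilinear real polynomial agreeing with $f$. The sensitivity graph $G_f$ has vertex set $\{0,1\}^n$ and an edge between $x$ and $y$ iff they differ in exactly one coordinate and $f(x)\ne f(y)$; $A_f$ is its adjacency matrix and $\lambda(f)=\|A_f\|$ (spectral norm). *)

From HB Require Import structures.
From mathcomp Require Import all_boot all_order all_algebra.
From mathcomp Require Import mpoly.
From mathcomp Require Import boolp classical_sets reals.

Set Implicit Arguments.
Unset Strict Implicit.
Unset Printing Implicit Defensive.

Import Order.TTheory GRing.Theory Num.Theory.
Local Open Scope ring_scope.

Definition cube (n : nat) : finType := {ffun 'I_n -> bool}.

Definition boolfun (n : nat) := cube n -> bool.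

Section Defs.
Variable R : realType.

(* The multilinear real polynomial agreeing with f on {0,1}^n:
   p_f = sum_x f(x) * prod_i (x_i ? X_i : 1 - X_i).
   It is multilinear (each variable has degree <= 1 in every monomial)
   and p_f(x) = f(x) for every x in {0,1}^n; such a polynomial is unique. *)
Definition mlpoly n (f : boolfun n) : {mpoly R[n]} :=
  \sum_(x : cube n) (f x)%:R *:
     \prod_(i < n) (if x i then 'X_i else 1 - 'X_i).

(* deg(f): total degree of the multilinear polynomial (deg of 0 is 0). *)
Definition deg n (f : boolfun n) : nat := (msize (mlpoly f)).-1.

Definition hamming1 n (x y : cube n) : bool := #|[set k | x k != y k]| == 1%N.

Definition sens_edge n (f : boolfun n) (x y : cube n) : bool :=
  hamming1 x y && (f x != f y).

Definition sens_adj n (f : boolfun n) : 'M[R]_#|cube n| :=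
  \matrix_(i, j) (sens_edge f (enum_val i) (enum_val j))%:R.

Definition enorm m (v : 'cV[R]_m) : R := Num.sqrt (\sum_i v i 0 ^+ 2).

Definition specnorm m (A : 'M[R]_m) : R :=
  sup [set enorm (A *m v) / enorm v | v in [set v : 'cV[R]_m | v != 0]].

Definition lambda n (f : boolfun n) : R := specnorm (sens_adj f).

End Defs.

From HB Require Import structures.
From mathcomp Require Import all_boot all_order all_algebra.
From mathcomp Require Import mpoly.
From mathcomp Require Import boolp classical_sets reals.
From mathcomp Require Import zify ring lra.
Import Order.TTheory GRing.Theory Num.Theory.
Local Open Scope ring_scope.
Set Implicit Arguments. Unset Strict Implicit. Unset Printing Implicit Defensive.

(* Let g = (-1)^f and write x^j for x with bit j flipped.  Since
   [f x <> f (x^j)] = g x * (g x - g (x^j)) / 2, the adjacency operator of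
   the sensitivity graph is  A v = g * K v  with
        K v x = sum_j (g x - g (x^j)) / 2 * v (x^j),
   so |A v| = |K v|.  In the Walsh basis chi_S, K acts through the
   correlation matrix  C(S,T) = sum_x chi_S x * g x * chi_T x  as
        <chi_S, K chi_T> = (|S| - |T|) * C(S,T),
   and C(S,T) = 0 whenever | |S| - |T| | > d := deg f, because chi_S chi_T
   is orthogonal to every polynomial of degree < |S Delta T|.  Hence K is a
   Schur multiplier of C by (|S| - |T|) on a band of width d, and on that band
   4 (a - b) is the sum over t < 4d of products w(t+a) w(t+b+d) of +-1 square
   waves.
   Each such product turns <u, K v> into a bilinear form of two functions
   with the same Euclidean norms as u and v (Parseval), which is bounded by
   AM-GM since g^2 = 1.  This gives |K v| <= d |v| and hence the theorem. *)

Section SquareWave.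
Variable R : realType.
Variable d : nat.

Definition square_wave (m : nat) : R :=
  if (m %% (4 * d) < 2 * d)%N then 1 else -1.

Lemma square_wave_sq m : square_wave m * square_wave m = 1.
Proof. by rewrite /square_wave; case: ifP => _; rewrite ?mulrNN mulr1. Qed.

Lemma square_wave_periodic m : square_wave (m + 4 * d) = square_wave m.
Proof. by rewrite /square_wave modnDr. Qed.

Lemma square_wave_up m : (m < 2 * d)%N -> square_wave m = 1.
Proof.
by move=> Hm; rewrite /square_wave modn_small ?Hm //; apply: leq_trans Hm _; lia.
Qed.

Lemma square_wave_down m : (2 * d <= m < 4 * d)%N -> square_wave m = -1.
Proof. by move=> Hm; rewrite /square_wave modn_small ?ifF //; lia. Qed.

Lemma square_wave_up' m : (4 * d <= m < 6 * d)%N -> square_wave m = 1.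
Proof.
move=> Hm; rewrite -(subnK (_ : 4 * d <= m)%N) ?square_wave_periodic; last by lia.
by rewrite square_wave_up //; lia.
Qed.

Lemma sum_period_shift (G : nat -> R) N a : (forall m, G (m + N)%N = G m) ->
  \sum_(0 <= t < N) G (t + a)%N = \sum_(0 <= t < N) G t.
Proof.
move=> HG; elim: a => [|a IH]; first by apply: eq_bigr => t _; rewrite addn0.
rewrite -IH; set F := fun t => G (t + a)%N.
have F0 : F N = F 0%N by rewrite /F add0n addnC HG.
transitivity (\sum_(0 <= t < N) F t.+1).
  by apply: eq_bigr => t _; rewrite /F addnS addSn.
by apply: (addrI (F 0%N)); rewrite -big_nat_recl // big_nat_recr //= F0 addrC.
Qed.

Lemma square_wave_autocorr j : (j <= 2 * d)%N ->
  \sum_(0 <= t < 4 * d) square_wave t * square_wave (t + j)%N = (4 * d)%:R - (4 * j)%:R.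
Proof.
move=> Hj.
have piece (a b : nat) (c : R) : (forall t, (a <= t < b)%N ->
    square_wave t * square_wave (t + j)%N = c) ->
    \sum_(a <= t < b) square_wave t * square_wave (t + j)%N = (b - a)%:R * c.
  by move=> H; rewrite (eq_big_nat _ _ H) sumr_const_nat mulr_natl.
rewrite (@big_cat_nat _ _ _ (2 * d - j)) //=; last by lia.
rewrite (@big_cat_nat _ _ _ (2 * d) (2 * d - j)) //=; try lia.
rewrite (@big_cat_nat _ _ _ (4 * d - j) (2 * d)) //=; try lia.
rewrite (piece _ _ 1); last first.
  by move=> t Ht; rewrite !square_wave_up ?mulr1 //; lia.
rewrite (piece _ _ (-1)); last first.
  by move=> t Ht; rewrite square_wave_up ?square_wave_down ?mul1r //; lia.
rewrite (piece _ _ 1); last first.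
  by move=> t Ht; rewrite !square_wave_down ?mulrNN ?mulr1 //; lia.
rewrite (piece _ _ (-1)); last first.
  by move=> t Ht; rewrite square_wave_down ?square_wave_up' ?mulN1r //; lia.
rewrite subn0 (_ : 2 * d - (2 * d - j) = j)%N; last by lia.
rewrite (_ : 4 * d - (4 * d - j) = j)%N; last by lia.
rewrite (_ : 4 * d - j - 2 * d = 2 * d - j)%N; last by lia.
rewrite (natrB _ Hj) !natrM; lra.
Qed.

Lemma square_wave_difference a b : (a <= b + d)%N -> (b <= a + d)%N ->
  (a%:R - b%:R) * 4 =
  \sum_(0 <= t < 4 * d) square_wave (t + a)%N * square_wave (t + (b + d))%N.
Proof.
move=> Hab Hba; set j := (b + d - a)%N.
have -> : \sum_(0 <= t < 4 * d) square_wave (t + a)%N * square_wave (t + (b + d))%N =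
    \sum_(0 <= t < 4 * d) (fun m => square_wave m * square_wave (m + j)%N) (t + a)%N.
  by apply: eq_bigr => t _ /=; congr (_ * square_wave _); rewrite /j; lia.
rewrite (@sum_period_shift (fun m => square_wave m * square_wave (m + j)%N)); last first.
  move=> m /=; rewrite square_wave_periodic.
  by rewrite (_ : m + 4 * d + j = (m + j) + 4 * d)%N ?square_wave_periodic //; lia.
rewrite square_wave_autocorr; last by rewrite /j; lia.
rewrite /j !natrM (natrB _ Hab) natrD; lra.
Qed.

End SquareWave.

Section Walsh.
Variable R : realType.
Variable n : nat.

Definition flip (x : cube n) (j : 'I_n) : cube n :=
  [ffun i => if i == j then ~~ x i else x i].

Lemma flipK j : involutive (flip ^~ j).
Proof.
by move=> x; apply/ffunP => i; rewrite !ffunE; case: (i == j); rewrite ?negbK.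
Qed.

Lemma flip_inj j : injective (flip ^~ j).
Proof. exact: inv_inj (flipK j). Qed.

Definition bsign (b : bool) : R := if b then -1 else 1.

Lemma bsign_sq b : bsign b * bsign b = 1.
Proof. by case: b; rewrite /bsign ?mulrNN mulr1. Qed.

Definition chi (S : {set 'I_n}) (x : cube n) : R := \prod_(i in S) bsign (x i).

Lemma chi_sq S x : chi S x * chi S x = 1.
Proof. by rewrite /chi -big_split big1 // => i _; exact: bsign_sq. Qed.

Definition flip_factor (S : {set 'I_n}) (j : 'I_n) : R := if j \in S then -1 else 1.

Lemma chi_flip S x j : chi S (flip x j) = flip_factor S j * chi S x.
Proof.
rewrite /chi /flip_factor; case: ifP => jS; last first.
  rewrite mul1r; apply: eq_bigr => i iS; rewrite ffunE.
  by case: eqP => // ij; rewrite ij jS in iS.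
rewrite (bigD1 j jS) [in RHS](bigD1 j jS) /= ffunE eqxx mulrA mulN1r.
have -> : bsign (~~ x j) = - bsign (x j) by case: (x j); rewrite /bsign ?opprK.
by congr (- _ * _); apply: eq_bigr => i /andP[_ /negbTE ij]; rewrite ffunE ij.
Qed.

Lemma sum_flip_factor S : \sum_j flip_factor S j = n%:R - 2 * #|S|%:R.
Proof.
have cardS : \sum_j ((j \in S)%:R : R) = #|S|%:R.
  rewrite -sum1_card natr_sum [RHS]big_mkcond.
  by apply: eq_bigr => i _; case: (i \in S).
transitivity (\sum_j (1 - 2 * (j \in S)%:R) : R).
  by apply: eq_bigr => j _; rewrite /flip_factor; case: (j \in S); rewrite /= ?mulr1n; ring.
by rewrite sumrB -mulr_sumr cardS sumr_const card_ord.
Qed.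

Lemma sum_flip_odd (F : cube n -> R) j : (forall x, F (flip x j) = - F x) ->
  \sum_x F x = 0.
Proof.
move=> HF; have : \sum_x F x = - \sum_x F x.
  rewrite {1}(reindex_inj (@flip_inj j)) /= -sumrN.
  by apply: eq_bigr => x _; rewrite HF.
lra.
Qed.

Definition Ncube : R := (2 ^ n)%:R.

Lemma Ncube_gt0 : 0 < Ncube.
Proof. by rewrite ltr0n expn_gt0. Qed.

Lemma chi_orth S T : \sum_x chi S x * chi T x = if S == T then Ncube else 0.
Proof.
case: eqP => [<-|/eqP ST].
  under eq_bigr => x _ do rewrite chi_sq.
  by rewrite sumr_const card_ffun card_bool card_ord.
have [j Hj] : exists j, (j \in S) != (j \in T).
  apply/existsP; move: ST; apply: contraR => /existsPn H.
  by apply/eqP/setP => j; move: (H j); rewrite negbK => /eqP.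
apply: (@sum_flip_odd _ j) => x; rewrite !chi_flip /flip_factor.
by move: Hj; case: (j \in S); case: (j \in T) => // _; ring.
Qed.

Lemma chi_orth_points x y :
  \sum_S chi S x * chi S y = if x == y then Ncube else 0.
Proof.
have E S : chi S x * chi S y = \prod_i (if i \in S then bsign (x i) * bsign (y i) else 1).
  by rewrite /chi -big_split /= big_mkcond.
under eq_bigr => S _ do rewrite E.
rewrite -(@bigA_distr R 0 1 *%R +%R) /=; case: eqP => [<-|/eqP xy].
  under eq_bigr => i _ do rewrite bsign_sq.
  by rewrite prodr_const card_ord /Ncube natrX.
have [j Hj] : exists j, x j != y j.
  apply/existsP; move: xy; apply: contraR => /existsPn H.
  by apply/eqP/ffunP => j; move: (H j); rewrite negbK => /eqP.
rewrite (bigD1 j) //= [_ + _](_ : _ = 0) ?mul0r //.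
by move: Hj; case: (x j); case: (y j) => // _; rewrite /bsign; ring.
Qed.

Lemma sum_prod_expand (I J K : finType) (a : I -> R) (b : J -> R)
    (P : I -> K -> R) (Q : J -> K -> R) :
  \sum_k (\sum_i a i * P i k) * (\sum_j b j * Q j k) =
  \sum_i \sum_j a i * b j * \sum_k P i k * Q j k.
Proof.
under eq_bigr => k _ do rewrite big_distrlr /=.
rewrite exchange_big /=; apply: eq_bigr => i _.
rewrite exchange_big /=; apply: eq_bigr => j _.
by rewrite mulr_sumr; apply: eq_bigr => k _; ring.
Qed.

Definition fourier (u : cube n -> R) (S : {set 'I_n}) : R :=
  Ncube^-1 * \sum_x u x * chi S x.

Lemma fourier_inversion (u : cube n -> R) x : u x = \sum_S fourier u S * chi S x.
Proof.
transitivity (Ncube^-1 * \sum_y u y * \sum_S chi S y * chi S x); last first.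
  rewrite /fourier; under [RHS]eq_bigr => S _ do rewrite -mulrA mulr_suml.
  rewrite -[RHS]mulr_sumr; congr (_ * _); rewrite [RHS]exchange_big /=.
  apply: eq_bigr => y _.
  by rewrite mulr_sumr; apply: eq_bigr => S _; rewrite mulrA.
under eq_bigr => y _ do rewrite chi_orth_points.
rewrite (bigD1 x) //= eqxx big1 ?addr0; last by move=> y /negbTE ->; rewrite mulr0.
by rewrite mulrCA mulVf ?mulr1 // gt_eqF // Ncube_gt0.
Qed.

Lemma parseval_series (a : {set 'I_n} -> R) :
  \sum_x (\sum_S a S * chi S x) ^+ 2 = Ncube * \sum_S a S ^+ 2.
Proof.
under eq_bigr => x _ do rewrite expr2.
rewrite (sum_prod_expand a a chi chi).
under eq_bigr => S _ do under eq_bigr => T _ do rewrite chi_orth.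
rewrite mulr_sumr; apply: eq_bigr => S _.
rewrite (bigD1 S) //= eqxx big1 ?addr0; last first.
  by move=> T /negbTE; rewrite eq_sym => ->; rewrite mulr0.
by rewrite expr2 mulrC.
Qed.

Lemma parseval (u : cube n -> R) :
  \sum_x u x ^+ 2 = Ncube * \sum_S fourier u S ^+ 2.
Proof.
by rewrite -parseval_series; apply: eq_bigr => x _; rewrite -fourier_inversion.
Qed.

Definition fmult (w : {set 'I_n} -> R) (u : cube n -> R) (x : cube n) : R :=
  \sum_S (w S * fourier u S) * chi S x.

Lemma fmult_isometry (w : {set 'I_n} -> R) (u : cube n -> R) :
  (forall S, w S * w S = 1) -> \sum_x fmult w u x ^+ 2 = \sum_x u x ^+ 2.
Proof.
move=> w2; rewrite parseval_series parseval; congr (_ * _).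
by apply: eq_bigr => S _; rewrite !expr2 mulrACA w2 mul1r.
Qed.

(* the matrix of multiplication by g in the Walsh basis, up to Ncube *)
Definition corr (g : cube n -> R) (S T : {set 'I_n}) : R :=
  \sum_x chi S x * g x * chi T x.

Lemma fmult_corr (g : cube n -> R) (a b : {set 'I_n} -> R) (u v : cube n -> R) :
  \sum_x fmult a u x * g x * fmult b v x =
  \sum_S \sum_T (a S * fourier u S) * (b T * fourier v T) * corr g S T.
Proof.
rewrite -(sum_prod_expand _ _ (fun S x => chi S x * g x) chi).
apply: eq_bigr => x _; rewrite /fmult mulr_suml.
by congr (_ * _); apply: eq_bigr => S _; rewrite mulrA.
Qed.

End Walsh.

Lemma weighted_amgm (R : realFieldType) (a b s c : R) : 0 < c -> s * s = 1 ->
  2 * (a * s * b) <= c * a ^+ 2 + c^-1 * b ^+ 2.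
Proof.
move=> c_gt0 s2.
have cV : c * c^-1 = 1 by rewrite mulfV // gt_eqF.
have sq : 0 <= c^-1 * (c * a - s * b) ^+ 2.
  by rewrite mulr_ge0 ?sqr_ge0 // invr_ge0 ltW.
have expand : c^-1 * (c * a - s * b) ^+ 2 = (c * c^-1) * (c * a ^+ 2)
    - 2 * (c * c^-1) * (a * s * b) + c^-1 * ((s * s) * b ^+ 2) by ring.
rewrite expand cV s2 !mul1r in sq; lra.
Qed.

(* The operator K_g with K_g v x = sum_j (g x - g x^j) / 2 * v x^j.  For
   g = (-1)^f it is the adjacency operator of the sensitivity graph
   conjugated by g. *)
Section SensitivityOperator.
Variable R : realType.
Variable n : nat.
Variable g : cube n -> R.

Definition sens_op (v : cube n -> R) (x : cube n) : R :=
  \sum_j (g x - g (flip x j)) / 2 * v (flip x j).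

Lemma sens_op_linear (c : {set 'I_n} -> R) x :
  sens_op (fun y => \sum_T c T * chi R T y) x = \sum_T c T * sens_op (chi R T) x.
Proof.
rewrite /sens_op; under eq_bigr => j _ do rewrite mulr_sumr.
rewrite exchange_big /=; apply: eq_bigr => T _.
by rewrite mulr_sumr; apply: eq_bigr => j _; rewrite mulrCA.
Qed.

Lemma sens_op_chi S T :
  \sum_x chi R S x * sens_op (chi R T) x = (#|S|%:R - #|T|%:R) * corr g S T.
Proof.
have flip_term j : \sum_x chi R S x * ((g x - g (flip x j)) / 2 * chi R T (flip x j))
    = (flip_factor R T j - flip_factor R S j) / 2 * corr g S T.
  have shifted : \sum_x chi R S x * g (flip x j) * chi R T x =
      flip_factor R S j * flip_factor R T j * corr g S T.
    rewrite (reindex_inj (@flip_inj n j)) /corr mulr_sumr; apply: eq_bigr => x _.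
    by rewrite flipK !chi_flip; ring.
  transitivity (flip_factor R T j / 2 * (corr g S T
      - \sum_x chi R S x * g (flip x j) * chi R T x)).
    rewrite /corr -sumrB mulr_sumr; apply: eq_bigr => x _; rewrite chi_flip; ring.
  rewrite shifted /flip_factor; case: (j \in S); case: (j \in T); ring.
rewrite /sens_op; under eq_bigr => x _ do rewrite mulr_sumr.
rewrite exchange_big /=; under eq_bigr => j _ do rewrite flip_term.
by rewrite -mulr_suml -mulr_suml sumrB !sum_flip_factor; field.
Qed.

Lemma sens_op_pairing (u v : cube n -> R) :
  \sum_x u x * sens_op v x = \sum_S \sum_T
    fourier u S * fourier v T * ((#|S|%:R - #|T|%:R) * corr g S T).
Proof.
have Kv x : sens_op v x = \sum_T fourier v T * sens_op (chi R T) x.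
  by rewrite -sens_op_linear; apply: eq_bigr => j _; rewrite -fourier_inversion.
under eq_bigr => x _ do rewrite Kv (fourier_inversion u x).
rewrite (sum_prod_expand _ _ (@chi R n) (fun T => sens_op (chi R T))).
by apply: eq_bigr => S _; apply: eq_bigr => T _; rewrite sens_op_chi.
Qed.

Variable d : nat.
Hypothesis g_sq : forall x, g x * g x = 1.
Hypothesis corr_band : forall S T, corr g S T != 0 ->
  (#|S| <= #|T| + d)%N && (#|T| <= #|S| + d)%N.

Let wave_l (t : nat) (S : {set 'I_n}) : R := square_wave R d (t + #|S|).
Let wave_r (t : nat) (T : {set 'I_n}) : R := square_wave R d (t + (#|T| + d)).

Lemma sens_op_waves (u v : cube n -> R) :
  \sum_x u x * sens_op v x = 4^-1 * \sum_(0 <= t < 4 * d)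
    \sum_x fmult (wave_l t) u x * g x * fmult (wave_r t) v x.
Proof.
under [X in _ = _ * X]eq_bigr => t _ do rewrite fmult_corr.
rewrite sens_op_pairing [X in _ = _ * X]exchange_big [RHS]mulr_sumr /=.
apply: eq_bigr => S _; rewrite [X in _ = _ * X]exchange_big [RHS]mulr_sumr /=.
apply: eq_bigr => T _.
have [->|/corr_band/andP[HST HTS]] := eqVneq (corr g S T) 0.
  by rewrite !mulr0 big1 ?mulr0 // => t _; rewrite mulr0.
rewrite -(@mulrK _ 4 _ (#|S|%:R - #|T|%:R)) ?unitfE ?pnatr_eq0 //.
rewrite (square_wave_difference R HST HTS) !mulr_suml !mulr_sumr.
by apply: eq_bigr => t _; rewrite /wave_l /wave_r; ring.
Qed.

(* Schur-multiplier bound: by AM-GM and Parseval each of the 4d forms is at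
   most (c |u|^2 + c^-1 |v|^2) / 2. *)
Lemma sens_op_form_bound (u v : cube n -> R) c : 0 < c ->
  2 * \sum_x u x * sens_op v x <=
  d%:R * (c * \sum_x u x ^+ 2 + c^-1 * \sum_x v x ^+ 2).
Proof.
move=> c_gt0; set B := c * _ + _.
have wave_bound t : 2 * \sum_x fmult (wave_l t) u x * g x * fmult (wave_r t) v x <= B.
  rewrite /B -(@fmult_isometry _ _ (wave_l t) u); last by move=> S; exact: square_wave_sq.
  rewrite -(@fmult_isometry _ _ (wave_r t) v); last by move=> T; exact: square_wave_sq.
  rewrite !mulr_sumr -big_split /=; apply: ler_sum => x _.
  exact: weighted_amgm.
have sum_bound : \sum_(0 <= t < 4 * d) 2 * \sum_x fmult (wave_l t) u x * g x *
    fmult (wave_r t) v x <= (4 * d)%:R * B.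
  apply: (le_trans (ler_sum _ (fun t _ => wave_bound t))).
  by rewrite sumr_const_nat subn0 mulr_natl.
rewrite sens_op_waves mulrA (mulrC 2) -mulrA mulr_sumr.
apply: (le_trans (ler_wpM2l _ sum_bound)); first by rewrite invr_ge0 ler0n.
by rewrite natrM !mulrA mulVf ?pnatr_eq0 // mul1r.
Qed.

(* The operator norm of K_g is at most d (take u = K_g v and c = 1/d). *)
Lemma sens_op_norm_bound (v : cube n -> R) :
  \sum_x sens_op v x ^+ 2 <= d%:R ^+ 2 * \sum_x v x ^+ 2.
Proof.
set Q := \sum_x _; set V := \sum_x _.
have form c : 0 < c -> 2 * Q <= d%:R * (c * Q + c^-1 * V).
  move=> c_gt0; have := sens_op_form_bound (sens_op v) v c_gt0.
  by under eq_bigr => x _ do rewrite -expr2.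
have [d0|d_gt0] := posnP d.
  by have := form 1 ltr01; rewrite d0 !mul0r expr0n /=; lra.
have dR : 0 < d%:R :> R by rewrite ltr0n.
have := form d%:R^-1; rewrite invr_gt0 invrK => /(_ dR).
rewrite mulrDr mulrA mulfV ?gt_eqF // mul1r mulrA -expr2; lra.
Qed.

End SensitivityOperator.

Section Degree.
Variable R : realType.
Variable n : nat.
Variable f : boolfun n.

Definition fsign (x : cube n) : R := bsign R (f x).

Lemma fsign_sq x : fsign x * fsign x = 1.
Proof. exact: bsign_sq. Qed.

Lemma mlpoly_eval (x : cube n) : (mlpoly R f).@[fun i => (x i)%:R] = (f x)%:R.
Proof.
rewrite /mlpoly raddf_sum /= (bigD1 x) //= [X in _ + X]big1.
  rewrite addr0 mevalZ rmorph_prod /= big1 ?mulr1 // => i _.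
  by case Hxi: (x i); rewrite ?mevalXU ?mevalB ?meval1 ?mevalXU Hxi /= ?mulr1n ?mulr0n ?subr0.
move=> y yx; rewrite mevalZ rmorph_prod /=.
have [i Hi] : exists i, y i != x i.
  apply/existsP; move: yx; apply: contraR => /existsPn H.
  by apply/eqP/ffunP => i; move: (H i); rewrite negbK => /eqP.
rewrite (bigD1 i) //=.
by move: Hi; case Hy: (y i); case Hx: (x i) => //= _;
  rewrite ?mevalXU ?mevalB ?meval1 ?mevalXU ?Hx /= ?mulr1n ?mulr0n ?subrr ?mul0r ?mulr0.
Qed.

Lemma mlpoly_orth (P : cube n -> R) :
  (forall m, m \in msupp (mlpoly R f) ->
     exists j, (m j = 0)%N /\ forall x, P (flip x j) = - P x) ->
  \sum_x (f x)%:R * P x = 0.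
Proof.
move=> HP.
under eq_bigr => x _ do rewrite -mlpoly_eval mevalE mulr_suml.
rewrite exchange_big /= big1_seq // => m /andP[_ mm].
have [j [mj Hj]] := HP m mm.
apply: (@sum_flip_odd R n _ j) => x; rewrite Hj mulrN; congr (- (_ * _)).
congr (_ * _); apply: eq_bigr => i _; rewrite ffunE.
by case: eqP => [->|//]; rewrite mj !expr0.
Qed.

Lemma exists_free_coord (A B : {set 'I_n}) (m : 'X_{1.. n}) :
  (#|B| + mdeg m < #|A|)%N -> exists j, [&& j \in A, j \notin B & m j == 0%N].
Proof.
move=> H; apply/existsP; apply: contraLR H => /existsPn Hn; rewrite -leqNgt.
have AB_le : (#|A :\: B| <= mdeg m)%N.
  rewrite mdegE -sum1_card (bigID (mem (A :\: B)) predT (fun j => m j)) /=.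
  apply: leq_trans (leq_addr _ _); apply: leq_sum => j jAB; rewrite lt0n.
  by move: (Hn j); rewrite finset.in_setD in jAB; case/andP: jAB => -> ->.
have A_le : (#|A| <= #|A :\: B| + #|B|)%N.
  by rewrite -(cardsID B A) addnC leq_add2l subset_leq_card // subsetIr.
lia.
Qed.

(* Far from the band S <> T, so corr g S T = - 2 <f, chi_S chi_T>; every
   monomial of f misses a coordinate j of S Delta T, and chi_S chi_T is odd
   under the flip of j, hence the correlation vanishes. *)
Lemma fsign_corr_band S T : corr fsign S T != 0 ->
  (#|S| <= #|T| + deg R f)%N && (#|T| <= #|S| + deg R f)%N.
Proof.
apply: contraR; rewrite negb_and -!ltnNge => far.
have ST : S != T by apply/eqP => E; move: far; rewrite E; lia.
have -> : corr fsign S T = \sum_x chi R S x * chi R T x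
    - 2 * \sum_x (f x)%:R * (chi R S x * chi R T x).
  rewrite mulr_sumr -sumrB; apply: eq_bigr => x _.
  by rewrite /fsign /bsign; case: (f x); rewrite /= ?mulr1n; ring.
rewrite chi_orth (negbTE ST) mlpoly_orth ?mulr0 ?subrr // => m mm.
have m_le : (mdeg m <= deg R f)%N by have := msize_mdeg_lt mm; rewrite /deg; lia.
case/orP: far => far.
  have [j /and3P[jS jT /eqP mj]] := @exists_free_coord S T m ltac:(lia).
  by exists j; split => // x; rewrite !chi_flip /flip_factor jS (negbTE jT); ring.
have [j /and3P[jT jS /eqP mj]] := @exists_free_coord T S m ltac:(lia).
by exists j; split => // x; rewrite !chi_flip /flip_factor jT (negbTE jS); ring.
Qed.

End Degree.

Section Adjacency.
Variable R : realType.
Variable n : nat.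
Variable f : boolfun n.

Lemma flip_diff (x y : cube n) j :
  (y == flip x j) = ([set k | x k != y k] == [set j]).
Proof.
apply/eqP/eqP => [->|H].
  apply/setP => k; rewrite !inE ffunE.
  by case: (k == j); rewrite ?eqxx //; case: (x k).
apply/ffunP => k; rewrite ffunE.
by move/setP: H => /(_ k); rewrite !inE; case: (k == j); case: (x k); case: (y k).
Qed.

Lemma sum_neighbours (x : cube n) (F : cube n -> R) :
  \sum_y (hamming1 x y)%:R * F y = \sum_j F (flip x j).
Proof.
have -> : \sum_j F (flip x j) = \sum_j \sum_y (y == flip x j)%:R * F y.
  apply: eq_bigr => j _; rewrite (bigD1 (flip x j)) //= eqxx mul1r big1 ?addr0 //.
  by move=> y /negbTE ->; rewrite mul0r.
rewrite exchange_big /=; apply: eq_bigr => y _; rewrite -mulr_suml; congr (_ * _).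
under eq_bigr => j _ do rewrite flip_diff.
rewrite /hamming1; set D := [set k | x k != y k].
have [/cards1P [j0 ->]|D_ne1] := boolP (#|D| == 1%N).
  rewrite (bigD1 j0) //= eqxx big1 ?addr0 // => j jj.
  by case: eqP => [/set1_inj E|_]; [rewrite E eqxx in jj | rewrite mulr0n].
rewrite big1 ?mulr0n // => j _.
by case: eqP => [E|_]; [move: D_ne1; rewrite E cards1 eqxx | rewrite mulr0n].
Qed.

(* Row x of A_f: since [f x <> f y] = g x * (g x - g y) / 2, A_f v = g * K_g v. *)
Lemma sens_edge_op (v : cube n -> R) (x : cube n) :
  \sum_y (sens_edge f x y)%:R * v y = fsign R f x * sens_op (fsign R f) v x.
Proof.
rewrite /sens_edge; under eq_bigr => y _ do rewrite -mulnb natrM -mulrA.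
rewrite sum_neighbours /sens_op mulr_sumr; apply: eq_bigr => j _.
rewrite mulrA; congr (_ * _).
by rewrite /fsign /bsign; case: (f x); case: (f (flip x j)); rewrite /= ?mulr1n; lra.
Qed.

Lemma sum_enum_rank (F : 'I_#|cube n| -> R) : \sum_i F i = \sum_x F (enum_rank x).
Proof.
have rank_bij : {on predT, bijective (@enum_rank (cube n))}.
  by apply: onW_bij; exists enum_val; [exact: enum_rankK | exact: enum_valK].
by rewrite (reindex _ rank_bij).
Qed.

(* |A_f v| <= deg f * |v|, because |A_f v| = |K_g v| for g = (-1)^f. *)
Lemma sens_adj_bound (v : 'cV[R]_#|cube n|) :
  \sum_i ((sens_adj R f *m v) i 0) ^+ 2 <= (deg R f)%:R ^+ 2 * \sum_i v i 0 ^+ 2.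
Proof.
set w := fun x : cube n => v (enum_rank x) 0.
have Av x : (sens_adj R f *m v) (enum_rank x) 0 = fsign R f x * sens_op (fsign R f) w x.
  rewrite mxE -sens_edge_op sum_enum_rank; apply: eq_bigr => y _.
  by rewrite mxE !enum_rankK.
rewrite !sum_enum_rank; under eq_bigr => x _ do rewrite Av exprMn expr2 fsign_sq mul1r.
exact: (sens_op_norm_bound (@fsign_sq R n f) (@fsign_corr_band R n f)).
Qed.

End Adjacency.

Theorem theorem4p1 (R : realType) (n : nat) (f : boolfun n) :
  lambda R f <= (deg R f)%:R.
Proof.
rewrite /lambda /specnorm; apply: ge_sup.
  pose v1 : 'cV[R]_#|cube n| := const_mx 1.
  have v1_neq0 : v1 != 0.
    apply/eqP => /matrixP /(_ (enum_rank [ffun=> false]) 0); rewrite !mxE.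
    by move/eqP; rewrite oner_eq0.
  by exists (enorm (sens_adj R f *m v1) / enorm v1); exists v1.
move=> _ [v _ <-]; rewrite /enorm.
set SV := \sum_i v i 0 ^+ 2.
have SV_ge0 : 0 <= SV by apply: sumr_ge0 => i _; exact: sqr_ge0.
have [->|SV_neq0] := eqVneq (Num.sqrt SV) 0; first by rewrite invr0 mulr0.
have SV_gt0 : 0 < Num.sqrt SV by rewrite lt_def SV_neq0 sqrtr_ge0.
rewrite ler_pdivrMr // -[_%:R]ger0_norm // -sqrtr_sqr -sqrtrM ?sqr_ge0 //.
by rewrite ler_sqrt ?mulr_ge0 ?sqr_ge0 //; exact: sens_adj_bound.
Qed.
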